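(* Let $\Sigma=\{\sigma_{\mathbf{a}|\mathbf{x}}\}$ be a no-signaling assemblage (with $n$ untrusted parties, outcome numbers $\mathcal{A}_i$, setting numbers $\mathcal{X}_i$, acting on $\mathbb{C}^d$). For each index $\mathbf{a}|\mathbf{x}$ let $R_{\mathbf{a}|\mathbf{x}}$ be the orthogonal projection onto $\mathrm{Im}(\sigma_{\mathbf{a}|\mathbf{x}})$, and let $\mathcal{L}$ be the set of all local deterministic boxes. Then $\Sigma$ is on the edge of the set of no-signaling assemblages if and only if $$\det\Big(\prod_{L\in\mathcal{L}}\Big(\prod_{\mathbf{a}|\mathbf{x}\in I_L}R_{\mathbf{a}|\mathbf{x}}-\mathbb{1}\Big)\Big)\neq 0,$$ where the (operator) products are taken in any fixed order.
   Context: Fix $n\ge 1$, integers $\mathcal{A}_i,\mathcal{X}_i\ge 1$ ($i=1,\dots,n$) and $d\ge1$. Write $\mathbf{a}|\mathbf{x}=a_1\dots a_n|x_1\dots x_n$ with $a_i\in\{0,\dots,\mathcal{A}_i-1\}$, $x_i\in\{0,\dots,\mathcal{X}_i-1\}$. A no-signaling assemblage is a collection $\Sigma=\{\sigma_{\mathbf{a}|\mathbf{x}}\}$ of positive semidefinite operators on $\mathbb{C}^d$ such that $\sum_{\mathbf{a}}\sigma_{\mathbf{a}|\mathbf{x}}=\rho_B$ for all $\mathbf{x}$, where $\rho_B$ is a fixed density operator (trace one), and for every subset $I=\{i_1,\dots,i_s\}\subset\{1,\dots,n\}$ with $1\le s<n$ the marginal $\sum_{a_j:\,j\notin I}\sigma_{\mathbf{a}|\mathbf{x}}$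 depends only on $a_{i_1},\dots,a_{i_s},x_{i_1},\dots,x_{i_s}$ (not on $x_j$, $j\notin I$). A local deterministic box $L$ is given by functions $f_i:\{0,\dots,\mathcal{X}_i-1\}\to\{0,\dots,\mathcal{A}_i-1\}$, with $p_L(\mathbf{a}|\mathbf{x})=\prod_i\delta_{a_i,f_i(x_i)}$; set $I_L=\{\mathbf{a}|\mathbf{x}: p_L(\mathbf{a}|\mathbf{x})\neq 0\}$. An assemblage admits an LHS model if $\sigma_{\mathbf{a}|\mathbf{x}}=\sum_j q_j\prod_{i=1}^n p^{(A_i)}_j(a_i|x_i)\rho_j$ with $q_j\ge0$, $\sum_j q_j=1$, density operators $\rho_j$ on $\mathbb{C}^d$ and conditional probability distributions $p^{(A_i)}_j(\cdot|x_i)$. A no-signaling assemblage $\Sigma$ is on the edge of the set of no-signaling assemblages if whenever $\Sigma=\epsilon\Sigma_1+(1-\epsilon)\Sigma_2$ with $\epsilon\in[0,1]$, $\Sigma_1$ an LHS assemblage and $\Sigma_2$ a no-signaling assemblage (same scenario), necessarily $\epsilon=0$. *)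

From mathcomp Require Import all_boot all_order all_algebra.
From mathcomp Require Import reals.
From mathcomp.real_closed Require Import complex.
Set Implicit Arguments.
Unset Strict Implicit.
Unset Printing Implicit Defensive.
Import Order.TTheory GRing.Theory Num.Theory.
Local Open Scope ring_scope.

Section Assemblages.
Variable R : realType.
Local Notation C := R[i].

Definition adj (m k : nat) (M : 'M[C]_(m, k)) : 'M[C]_(k, m) :=
  (map_mx Num.conj M)^T.

Definition psd (m : nat) (M : 'M[C]_m) : Prop :=
  adj M = M /\ forall v : 'cV[C]_m, 0 <= (adj v *m M *m v) 0 0.

Definition density (m : nat) (M : 'M[C]_m) : Prop := psd M /\ \tr M = 1.

(* P is the orthogonal projection onto the image (column space) of S *)
Definition orth_proj_onto (m : nat) (S P : 'M[C]_m) : Prop :=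
  P *m P = P /\ adj P = P /\ (P^T == S^T)%MS.

Variables (n : nat) (A X : 'I_n -> nat).

Definition outcome := {dffun forall i : 'I_n, 'I_(A i)}.
Definition setting := {dffun forall i : 'I_n, 'I_(X i)}.

Definition ldbox := {dffun forall i : 'I_n, {ffun 'I_(X i) -> 'I_(A i)}}.

Definition in_IL (L : ldbox) (ax : outcome * setting) : bool :=
  [forall i, ax.1 i == L i (ax.2 i)].

Variable d : nat.

Definition assemblage := outcome -> setting -> 'M[C]_d.

Definition no_signaling (S : assemblage) : Prop :=
  (exists rhoB : 'M[C]_d, density rhoB /\ forall x, \sum_a S a x = rhoB)
  /\ (forall a x, psd (S a x))
  /\ (forall I : {set 'I_n}, (0 < #|I| < n)%N ->
        forall (a : outcome) (x x' : setting),
          (forall i, i \in I -> x i = x' i) ->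
          \sum_(a' : outcome | [forall i in I, a' i == a i]) S a' x
          = \sum_(a' : outcome | [forall i in I, a' i == a i]) S a' x').

Definition LHS (S : assemblage) : Prop :=
  exists (m : nat) (q : 'I_m -> C) (rho : 'I_m -> 'M[C]_d)
         (p : 'I_m -> forall i : 'I_n, 'I_(X i) -> 'I_(A i) -> C),
    (forall j, 0 <= q j) /\ \sum_j q j = 1
    /\ (forall j, density (rho j))
    /\ (forall j i xi ai, 0 <= p j i xi ai)
    /\ (forall j i xi, \sum_ai p j i xi ai = 1)
    /\ (forall (a : outcome) (x : setting),
          S a x = \sum_j (q j * \prod_i p j i (x i) (a i)) *: rho j).

Definition on_edge (S : assemblage) : Prop :=
  forall (eps : C) (S1 S2 : assemblage),
    0 <= eps <= 1 -> LHS S1 -> no_signaling S2 ->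
    (forall a x, S a x = eps *: S1 a x + (1 - eps) *: S2 a x) ->
    eps = 0.

End Assemblages.

From Pilot Require Import Defs.
From mathcomp Require Import all_boot all_order all_algebra.
From mathcomp Require Import reals.
From mathcomp.real_closed Require Import complex.
From mathcomp Require Import ring.
Set Implicit Arguments.
Unset Strict Implicit.
Unset Printing Implicit Defensive.
Import Order.TTheory GRing.Theory Num.Theory.
Local Open Scope ring_scope.

(* The determinant vanishes iff some local deterministic box L and some vector
   v <> 0 satisfy R_{a|x} v = v for every a|x in I_L: a matrix R - 1 is
   singular iff R fixes a nonzero vector, and a product of orthogonal
   projections fixes v iff each factor does, because no factor increases |v|.
   If such L and v exist, then v lies in the range of every S_{a|x} on I_L, so
   S_{a|x} - eps |v><v| stays positive for a small eps > 0; removing eps times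
   the deterministic assemblage (L, |v><v| / |v|^2) leaves a no-signaling
   remainder, and S is not on the edge.  Conversely, an LHS part of weight
   eps > 0 contains a deterministic component (L, rho) whose support lies in
   the support of S_{a|x} for every a|x in I_L, so any nonzero column of rho
   is fixed by the corresponding projections. *)

Lemma sumr_neq0_witness (V : nmodType) (I : finType) (F : I -> V) :
  \sum_i F i != 0 -> exists i, F i != 0.
Proof.
move=> sum_neq0; apply/existsP; apply: contraNT sum_neq0 => /existsPn F0.
by rewrite big1 // => i _; apply/eqP/negPn/F0.
Qed.

Section Adjoint.
Variable R : realType.
Local Notation C := R[i].

Lemma adjmxE m k (M : 'M[C]_(m, k)) i j : adj M i j = (M j i)^*.
Proof. by rewrite !mxE. Qed.

Lemma adjmxK m k (M : 'M[C]_(m, k)) : adj (adj M) = M.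
Proof. by apply/matrixP=> i j; rewrite !adjmxE conjCK. Qed.

Lemma adjmxM m k l (M : 'M[C]_(m, k)) (N : 'M[C]_(k, l)) :
  adj (M *m N) = adj N *m adj M.
Proof. by rewrite /adj map_mxM trmx_mul. Qed.

Lemma adjmxD m k (M N : 'M[C]_(m, k)) : adj (M + N) = adj M + adj N.
Proof. by rewrite /adj map_mxD linearD. Qed.

Lemma adjmxB m k (M N : 'M[C]_(m, k)) : adj (M - N) = adj M - adj N.
Proof. by rewrite /adj map_mxB linearB. Qed.

Lemma adjmxZ m k c (M : 'M[C]_(m, k)) : adj (c *: M) = c^* *: adj M.
Proof. by rewrite /adj map_mxZ linearZ. Qed.

Lemma adjmx1 m : adj (1%:M : 'M[C]_m) = 1%:M.
Proof. by rewrite /adj map_scalar_mx rmorph1 tr_scalar_mx. Qed.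

Definition qform m (u : 'cV[C]_m) (M : 'M[C]_m) (z : 'cV[C]_m) : C :=
  (adj u *m M *m z) 0 0.

Definition sqnorm m (y : 'cV[C]_m) : C := (adj y *m y) 0 0.

Lemma qformD m (u z : 'cV[C]_m) M N : qform u (M + N) z = qform u M z + qform u N z.
Proof. by rewrite /qform mulmxDr mulmxDl mxE. Qed.

Lemma qformZ m (u z : 'cV[C]_m) c M : qform u (c *: M) z = c * qform u M z.
Proof. by rewrite /qform -scalemxAr -scalemxAl mxE. Qed.

Lemma qform_sum m (u z : 'cV[C]_m) (I : finType) (F : I -> 'M[C]_m) :
  qform u (\sum_i F i) z = \sum_i qform u (F i) z.
Proof.
apply: (big_morph _ (qformD u z)).
by rewrite /qform mulmx0 mul0mx mxE.
Qed.

Lemma qform_conj m (u z : 'cV[C]_m) M : adj M = M -> (qform u M z)^* = qform z M u.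
Proof. by move=> selfM; rewrite /qform -adjmxE !adjmxM adjmxK selfM mulmxA. Qed.

Lemma qform_rank1 m (u v : 'cV[C]_m) :
  qform u (v *m adj v) u = `|(adj u *m v) 0 0| ^+ 2.
Proof.
rewrite normCK /qform mulmxA -mulmxA [in LHS]mxE big_ord1.
by rewrite -adjmxE adjmxM adjmxK.
Qed.

Lemma qform_subZ m (u z : 'cV[C]_m) M t :
  qform (u - t *: z) M (u - t *: z) =
  qform u M u - t * qform u M z - t^* * qform z M u + t^* * t * qform z M z.
Proof.
rewrite /qform adjmxB adjmxZ !(mulmxBl, mulmxBr) -!scalemxAl -!scalemxAr !mxE.
ring.
Qed.

Lemma sqnormE m (y : 'cV[C]_m) : sqnorm y = \sum_i `|y i 0| ^+ 2.
Proof. by rewrite /sqnorm mxE; apply: eq_bigr => i _; rewrite adjmxE normCK mulrC. Qed.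

Lemma sqnorm_ge0 m (y : 'cV[C]_m) : 0 <= sqnorm y.
Proof. by rewrite sqnormE sumr_ge0 // => i _; rewrite exprn_ge0. Qed.

Lemma sqnorm_eq0 m (y : 'cV[C]_m) : (sqnorm y == 0) = (y == 0).
Proof.
apply/idP/eqP => [|->]; last by rewrite /sqnorm mulmx0 mxE.
rewrite sqnormE psumr_eq0 => [/allP y0|i _]; last exact: exprn_ge0.
apply/matrixP=> i j; rewrite (ord1 j) mxE.
by have := y0 i (mem_index_enum _); rewrite sqrf_eq0 normr_eq0 => /eqP.
Qed.

Lemma sqnorm_gt0 m (y : 'cV[C]_m) : (0 < sqnorm y) = (y != 0).
Proof. by rewrite lt_def sqnorm_eq0 sqnorm_ge0 andbT. Qed.

End Adjoint.

Section Psd.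
Variable R : realType.
Local Notation C := R[i].

Lemma psd_qform_ge0 m (M : 'M[C]_m) u : psd M -> 0 <= qform u M u.
Proof. by case=> _; apply. Qed.

(* Expand [0 <= qform (u - t z) M (u - t z)] at [t = k (qform u M z)^*]. *)
Lemma psd_qform_bound m (M : 'M[C]_m) u z (k : C) : psd M -> 0 <= k ->
  k * `|qform u M z| ^+ 2 * (2 - k * qform z M z) <= qform u M u.
Proof.
move=> psdM k_ge0; have kR := conj_Creal (ger0_real k_ge0).
have := psd_qform_ge0 (u - (k * (qform u M z)^*) *: z) psdM.
rewrite qform_subZ rmorphM /= kR conjCK normCK !(qform_conj _ _ psdM.1).
move=> ge0; rewrite -subr_ge0; apply: le_trans ge0 _.
by rewrite le_eqVlt; apply/orP; left; apply/eqP; ring.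
Qed.

Lemma psd_qform_eq0 m (M : 'M[C]_m) u : psd M -> qform u M u = 0 -> M *m u = 0.
Proof.
move=> psdM uMu0; apply/eqP; rewrite -sqnorm_eq0.
pose q := qform (M *m u) M (M *m u); pose k := (q + 1)^-1.
have q_ge0 : 0 <= q by apply: psd_qform_ge0.
have k_gt0 : 0 < k by rewrite invr_gt0 ltr_wpDl.
have kq_lt2 : 0 < 2 - k * q.
  rewrite subr_gt0 (@le_lt_trans _ _ 1) ?ltr1n // /k mulrC.
  by rewrite ler_pdivrMr ?mul1r ?lerDl // (le_lt_trans q_ge0) ?ltrDl.
have uMMu : qform u M (M *m u) = sqnorm (M *m u).
  by rewrite /qform /sqnorm adjmxM psdM.1 mulmxA.
have := psd_qform_bound u (M *m u) psdM (ltW k_gt0).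
rewrite uMMu uMu0 -/q pmulr_lle0 // pmulr_rle0 // => sq_le0.
by rewrite -normr_eq0 -sqrf_eq0 eq_le sq_le0 exprn_ge0.
Qed.

Lemma psdZ m (M : 'M[C]_m) c : 0 <= c -> psd M -> psd (c *: M).
Proof.
move=> c_ge0 [selfM M_ge0]; split.
  by rewrite adjmxZ selfM (conj_Creal (ger0_real c_ge0)).
by move=> v; rewrite -/(qform _ _ _) qformZ mulr_ge0 //; apply: M_ge0.
Qed.

Lemma psdD m (M N : 'M[C]_m) : psd M -> psd N -> psd (M + N).
Proof.
move=> [selfM M_ge0] [selfN N_ge0]; split; first by rewrite adjmxD selfM selfN.
by move=> v; rewrite -/(qform _ _ _) qformD addr_ge0 //; [apply: M_ge0 | apply: N_ge0].
Qed.

Lemma psd0 m : psd (0 : 'M[C]_m).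
Proof.
split=> [|v]; last by rewrite mulmx0 mul0mx mxE.
by apply/matrixP=> i j; rewrite adjmxE !mxE conjC0.
Qed.

Lemma psd_sum m (I : finType) (F : I -> 'M[C]_m) :
  (forall i, psd (F i)) -> psd (\sum_i F i).
Proof.
move=> psdF; apply: (big_ind (@psd R m)) => [|M N|i _].
- exact: psd0.
- exact: psdD.
- exact: psdF.
Qed.

Lemma psd_sub_rank1 m (M : 'M[C]_m) w (k : C) : psd M -> 0 <= k ->
  k * qform w M w <= 1 -> psd (M - k *: (M *m w *m adj (M *m w))).
Proof.
move=> psdM k_ge0 kq_le1; split.
  by rewrite adjmxB adjmxZ adjmxM adjmxK psdM.1 (conj_Creal (ger0_real k_ge0)).
move=> u; rewrite -/(qform _ _ _) qformD -scaleNr qformZ qform_rank1.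
have -> : (adj u *m (M *m w)) 0 0 = qform u M w by rewrite /qform mulmxA.
rewrite mulNr subr_ge0 (le_trans _ (psd_qform_bound u w psdM k_ge0)) //.
by rewrite -[leLHS]mulr1 ler_wpM2l ?mulr_ge0 ?exprn_ge0 // lerBrDr lerD.
Qed.

Lemma density_rank1 m (v : 'cV[C]_m) :
  v != 0 -> density ((sqnorm v)^-1 *: (v *m adj v)).
Proof.
rewrite -sqnorm_gt0 => v_gt0; split.
  apply: psdZ; first by rewrite invr_ge0 ltW.
  split=> [|u]; first by rewrite adjmxM adjmxK.
  by rewrite -/(qform _ _ _) qform_rank1 exprn_ge0.
by rewrite mxtraceZ mxtrace_mulC [\tr _]big_ord1 mulVf ?gt_eqF.
Qed.
End Psd.

Section Projections.
Variable R : realType.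
Local Notation C := R[i].

Definition orthoproj m (P : 'M[C]_m) : Prop := P *m P = P /\ adj P = P.

Lemma sqnorm_orthoproj m (P : 'M[C]_m) y : orthoproj P ->
  sqnorm y = sqnorm (P *m y) + sqnorm ((1%:M - P) *m y).
Proof.
move=> [PP selfP]; set Q := 1%:M - P.
have PQ : P *m Q = 0 by rewrite mulmxBr mulmx1 PP subrr.
have selfQ : adj Q = Q by rewrite adjmxB adjmx1 selfP.
have {1}-> : y = P *m y + Q *m y by rewrite -mulmxDl addrC subrK mul1mx.
have QP : Q *m P = 0 by rewrite mulmxBl mul1mx PP subrr.
rewrite /sqnorm adjmxD mulmxDl !mulmxDr !adjmxM selfP selfQ !mulmxA.
by rewrite -!(mulmxA (adj y)) PQ QP !(mulmx0, mul0mx) addr0 add0r mxE.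
Qed.

Lemma sqnorm_orthoproj_le m (P : 'M[C]_m) y : orthoproj P -> sqnorm (P *m y) <= sqnorm y.
Proof. by move=> projP; rewrite (sqnorm_orthoproj y projP) lerDl sqnorm_ge0. Qed.

Lemma orthoproj_sqnorm_fixed m (P : 'M[C]_m) y : orthoproj P ->
  sqnorm (P *m y) = sqnorm y -> P *m y = y.
Proof.
move=> projP eq_norm; have := sqnorm_orthoproj y projP.
rewrite eq_norm -{1}[sqnorm y]addr0 => /addrI/esym/eqP.
by rewrite sqnorm_eq0 mulmxBl mul1mx subr_eq0 eq_sym => /eqP.
Qed.

Section ProductOfProjections.
Variables (T : eqType) (m : nat) (F : T -> 'M[C]_m.+1).

Lemma big_cons_mulmx t (s : seq T) (v : 'cV[C]_m.+1) :
  (\prod_(t' <- t :: s) F t') *m v = F t *m ((\prod_(t' <- s) F t') *m v).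
Proof. by rewrite big_cons mulmxA. Qed.

Lemma sqnorm_prod_orthoproj_le s (v : 'cV[C]_m.+1) : {in s, forall t, orthoproj (F t)} ->
  sqnorm ((\prod_(t <- s) F t) *m v) <= sqnorm v.
Proof.
elim: s => [|t s IHs] projF; first by rewrite big_nil mul1mx.
have projFt : orthoproj (F t) by apply: projF; rewrite mem_head.
have projFs : {in s, forall t, orthoproj (F t)}.
  by move=> t' t's; apply: projF; rewrite inE t's orbT.
rewrite big_cons_mulmx.
exact: le_trans (sqnorm_orthoproj_le _ projFt) (IHs projFs).
Qed.

Lemma prod_orthoproj_fixed s (v : 'cV[C]_m.+1) : {in s, forall t, orthoproj (F t)} ->
  (\prod_(t <- s) F t) *m v = v <-> {in s, forall t, F t *m v = v}.
Proof.
elim: s => [|t s IHs] projF; first by rewrite big_nil mul1mx.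
have projFs : {in s, forall t, orthoproj (F t)}.
  by move=> t' t's; apply: projF; rewrite inE t's orbT.
have projFt : orthoproj (F t) by apply: projF; rewrite mem_head.
rewrite big_cons_mulmx; split=> [fixed | fixedF].
  suff fixed_s : (\prod_(t <- s) F t) *m v = v.
    move=> t'; rewrite inE => /predU1P[-> | t's]; first by rewrite -{1}fixed_s.
    exact: (IHs projFs).1 fixed_s t' t's.
  have fixed_Ft : F t *m ((\prod_(t <- s) F t) *m v) = (\prod_(t <- s) F t) *m v.
    apply: (orthoproj_sqnorm_fixed projFt); apply/le_anti.
    by rewrite sqnorm_orthoproj_le //= fixed sqnorm_prod_orthoproj_le.
  by rewrite -fixed_Ft fixed.
rewrite (IHs projFs).2 => [|t' t's]; first by rewrite fixedF ?mem_head.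
by apply: fixedF; rewrite inE t's orbT.
Qed.
End ProductOfProjections.

Section ProjectionOnto.
Variables (m : nat) (S P : 'M[C]_m).
Hypothesis projP : orth_proj_onto S P.

Lemma orth_proj_onto_orthoproj : orthoproj P.
Proof. by case: projP => PP [selfP _]. Qed.

Lemma orth_proj_onto_mul_id : P *m S = S.
Proof.
have [PP [_ /andP[_ /submxP[D defS]]]] := projP.
have -> : S = P *m D^T by rewrite -[S]trmxK defS trmx_mul trmxK.
by rewrite mulmxA PP.
Qed.

Lemma orth_proj_onto_range (v : 'cV[C]_m) : P *m v = v -> exists w, S *m w = v.
Proof.
have [_ [_ /andP[/submxP[D defP] _]]] := projP.
have {}defP : P = S *m D^T by rewrite -[P]trmxK defP trmx_mul trmxK.
by rewrite defP -mulmxA; exists (D^T *m v).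
Qed.

(* For psd matrices [qform u S u = 0] means [S u = 0], so the hypothesis says
   ker S <= ker M, i.e. range M <= range S. *)
Lemma orth_proj_onto_absorb (M : 'M[C]_m) : psd S -> psd M ->
  (forall u, qform u S u = 0 -> qform u M u = 0) -> P *m M = M.
Proof.
move=> psdS psdM ker_incl; have [PP selfP] := orth_proj_onto_orthoproj.
set Q := 1%:M - P.
have SQ : S *m Q = 0.
  have SP : S *m P = S by rewrite -psdS.1 -selfP -adjmxM orth_proj_onto_mul_id.
  by rewrite mulmxBr mulmx1 SP subrr.
have MQ : M *m Q = 0.
  apply/matrixP=> i j.
  have kerQ : qform (col j Q) S (col j Q) = 0.
    by rewrite /qform -mulmxA colE (mulmxA S) SQ mul0mx mulmx0 mxE.
  have := psd_qform_eq0 psdM (ker_incl _ kerQ).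
  by move=> /(congr1 (fun y : 'cV_m => y i 0)); rewrite colE mulmxA -colE !mxE.
have : adj (M *m Q) = 0 by rewrite MQ /adj map_mx0 trmx0.
rewrite adjmxM psdM.1 adjmxB adjmx1 selfP mulmxBl mul1mx => /eqP.
by rewrite subr_eq0 => /eqP.
Qed.

End ProjectionOnto.
End Projections.

Lemma det_prodmx (K : comNzRingType) m (T : Type) (s : seq T) (M : T -> 'M[K]_m.+1) :
  \det (\prod_(t <- s) M t) = \prod_(t <- s) \det (M t).
Proof. exact: (big_morph _ (@det_mulmx _ _) (det1 _ _)). Qed.

Lemma det_subr1_eq0P (K : fieldType) m (P : 'M[K]_m.+1) :
  reflect (exists2 v : 'cV_m.+1, v != 0 & P *m v = v) (\det (P - 1) == 0).
Proof.
rewrite -det_tr; apply: (iffP det0P) => [[r r_neq0 rP] | [v v_neq0 Pv]].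
  exists r^T; first by rewrite trmx_eq0.
  move: rP => /(congr1 trmx); rewrite trmx_mul trmxK trmx0 mulmxBl mul1mx.
  by move=> /eqP; rewrite subr_eq0 => /eqP.
exists v^T; first by rewrite trmx_eq0.
by rewrite -[v^T *m _]trmxK trmx_mul !trmxK mulmxBl mul1mx Pv subrr trmx0.
Qed.

Lemma col_neq0 (V : nmodType) m k (M : 'M[V]_(m, k)) : M != 0 -> exists j, col j M != 0.
Proof.
move=> M_neq0; apply/existsP; apply: contraNT M_neq0 => /existsPn col0.
by apply/eqP/matrixP=> i j; move/negPn/eqP/matrixP/(_ i 0): (col0 j); rewrite !mxE.
Qed.

Section Assemblages.
Variables (R : realType) (n : nat) (A X : 'I_n -> nat) (d : nat).
Local Notation C := R[i].

Definition ldbox_out (L : ldbox A X) (x : setting X) : outcome A :=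
  finfun (fun i => L i (x i)).

Lemma in_ILE L a x : in_IL L (a, x) = (a == ldbox_out L x).
Proof.
apply/forallP/eqP => [Lax | -> i]; last by rewrite ffunE.
by apply/ffunP=> i; rewrite ffunE; apply/eqP/Lax.
Qed.

Lemma det_fixed_vectorP (Rp : outcome A -> setting X -> 'M[C]_d.+1)
    (ordL : seq (ldbox A X)) (ordI : ldbox A X -> seq (outcome A * setting X)) :
  (forall a x, orthoproj (Rp a x)) -> (forall L, L \in ordL) ->
  (forall L ax, (ax \in ordI L) = in_IL L ax) ->
  reflect (exists L, exists2 v : 'cV_d.+1, v != 0 &
             forall ax, in_IL L ax -> Rp ax.1 ax.2 *m v = v)
          (\det (\prod_(L <- ordL) (\prod_(ax <- ordI L) Rp ax.1 ax.2 - 1)) == 0).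
Proof.
move=> projR memL memI.
have fixedP L v := @prod_orthoproj_fixed R _ _ (fun ax => Rp ax.1 ax.2) (ordI L) v
  (fun ax _ => projR ax.1 ax.2).
rewrite det_prodmx prodf_seq_eq0.
apply: (iffP hasP) => [[L _ /det_subr1_eq0P[v v_neq0 /fixedP fixed]] | [L [v v_neq0 fixed]]].
  by exists L, v => // ax; rewrite -memI; apply: fixed.
exists L; first exact: memL.
apply/det_subr1_eq0P; exists v => //; apply/fixedP => ax.
by rewrite memI; apply: fixed.
Qed.

Lemma ldbox_in_support (K : nzSemiRingType) (p : forall i, 'I_(X i) -> 'I_(A i) -> K) :
  (forall i xi, \sum_ai p i xi ai = 1) ->
  exists L : ldbox A X, forall i xi, p i xi (L i xi) != 0.
Proof.
move=> p_sum.
have box_i i : exists f : {ffun 'I_(X i) -> 'I_(A i)}, forall xi, p i xi (f xi) != 0.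
  have /fin_all_exists[f fP] xi : exists ai, p i xi ai != 0.
    by apply: sumr_neq0_witness; rewrite p_sum oner_neq0.
  by exists (finfun f) => xi; rewrite ffunE.
have [f fP] := fin_all_exists box_i.
by exists (finfun f) => i xi; rewrite ffunE.
Qed.

Lemma LHS_psd (S : assemblage R A X d) : Defs.LHS S -> forall a x, psd (S a x).
Proof.
move=> [m [q [rho [p [q_ge0 [_ [dens_rho [p_ge0 [_ defS]]]]]]]]] a x.
rewrite defS; apply: psd_sum => j; apply: psdZ (dens_rho j).1.
by rewrite mulr_ge0 // prodr_ge0.
Qed.

Lemma LHS_ldbox_support (S : assemblage R A X d) : Defs.LHS S ->
  exists L (rho : 'M[C]_d), density rho /\ forall a x u,
    in_IL L (a, x) -> qform u (S a x) u = 0 -> qform u rho u = 0.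
Proof.
move=> [m [q [rho [p [q_ge0 [q_sum [dens_rho [p_ge0 [p_sum defS]]]]]]]]].
have [j qj_neq0] : exists j, q j != 0.
  by apply: sumr_neq0_witness; rewrite q_sum oner_neq0.
have [L pL_neq0] := ldbox_in_support (p_sum j).
exists L, (rho j); split=> // a x u; rewrite in_ILE => /eqP -> {a}.
have coef_neq0 : q j * \prod_i p j i (x i) (ldbox_out L x i) != 0.
  by rewrite mulf_neq0 //; apply/prodf_neq0 => i _; rewrite ffunE.
rewrite defS qform_sum => /eqP; rewrite psumr_eq0 => [/allP/(_ j (mem_index_enum _))|j' _].
  by rewrite qformZ mulf_eq0 (negbTE coef_neq0) => /eqP.
rewrite qformZ !mulr_ge0 ?prodr_ge0 //; apply: psd_qform_ge0; exact: (dens_rho j').1.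
Qed.

Definition ldbox_assemblage (L : ldbox A X) (rho : 'M[C]_d) : assemblage R A X d :=
  fun a x => if in_IL L (a, x) then rho else 0.

Lemma ldbox_assemblage_LHS L rho : density rho -> Defs.LHS (ldbox_assemblage L rho).
Proof.
move=> dens_rho; exists 1%N, (fun _ => 1), (fun _ => rho),
  (fun _ i xi ai => (ai == L i xi)%:R).
do !split=> //; first by rewrite big_ord1.
  move=> _ i xi; rewrite (bigD1 (L i xi)) //= eqxx big1 ?addr0 //.
  by move=> ai /negbTE ->.
move=> a x; rewrite big_ord1 mul1r /ldbox_assemblage; case: ifP => [ILax | /negbT].
  by rewrite big1 ?scale1r // => i _; move/forallP: ILax => /(_ i) /= ->.
by move=> /forallPn[i /= /negbTE Li]; rewrite (bigD1 i) //= Li mul0r scale0r.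
Qed.

Lemma ldbox_assemblage_sum L rho (P : pred (outcome A)) x :
  \sum_(a | P a) ldbox_assemblage L rho a x = if P (ldbox_out L x) then rho else 0.
Proof.
rewrite -big_mkcondr /=; under eq_bigl do rewrite in_ILE.
case: ifP => P_Lx; [rewrite (big_pred1 (ldbox_out L x)) | rewrite big_pred0] => // a /=;
  by case: eqP => [->|]; rewrite ?P_Lx ?andbF.
Qed.

Lemma ldbox_assemblage_no_signaling L rho :
  density rho -> no_signaling (ldbox_assemblage L rho).
Proof.
move=> dens_rho; split; first by exists rho; split=> // x; rewrite ldbox_assemblage_sum.
split=> [a x | I _ a x x' eq_x].
  by rewrite /ldbox_assemblage; case: ifP => _; [exact: dens_rho.1 | exact: psd0].
rewrite !ldbox_assemblage_sum; congr (if _ then _ else _); apply: eq_forallb => i.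
by rewrite !ffunE; case: (boolP (i \in I)) => //= /eq_x ->.
Qed.

Lemma no_signaling_residual (x0 : setting X) (S T : assemblage R A X d) (eps : C) :
  eps < 1 -> no_signaling S -> no_signaling T ->
  (forall a x, psd (S a x - eps *: T a x)) ->
  no_signaling (fun a x => (1 - eps)^-1 *: (S a x - eps *: T a x)).
Proof.
move=> eps_lt1 [[rhoS [densS sumS]] [_ margS]] [[rhoT [densT sumT]] [_ margT]] psdST.
have c_ge0 : 0 <= (1 - eps)^-1 by rewrite invr_ge0 subr_ge0 ltW.
have sumST x : \sum_a (1 - eps)^-1 *: (S a x - eps *: T a x) =
               (1 - eps)^-1 *: (rhoS - eps *: rhoT).
  by rewrite -scaler_sumr sumrB -scaler_sumr sumS sumT.
split; [exists ((1 - eps)^-1 *: (rhoS - eps *: rhoT)); split=> // | split].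
- split; first by rewrite -(sumST x0); apply: psd_sum => a; apply: psdZ.
  rewrite mxtraceZ linearB /= mxtraceZ densS.2 densT.2 mulr1 mulVf //.
  by rewrite subr_eq0 eq_sym lt_eqF.
- by move=> a x; apply: psdZ.
move=> I I_proper a x x' eq_x.
rewrite -!scaler_sumr !sumrB -!scaler_sumr.
by rewrite (margS I I_proper a x x' eq_x) (margT I I_proper a x x' eq_x).
Qed.

End Assemblages.

Section Edge.
Variables (R : realType) (n : nat) (A X : 'I_n -> nat) (d : nat).
Local Notation C := R[i].
Variables (S : assemblage R A X d.+1) (Rp : outcome A -> setting X -> 'M[C]_d.+1).
Hypothesis projR : forall a x, orth_proj_onto (S a x) (Rp a x).

Lemma fixed_vector_of_decomposition (eps : C) (S1 S2 : assemblage R A X d.+1) :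
  (forall a x, psd (S a x)) -> (forall a x, psd (S2 a x)) ->
  0 <= eps <= 1 -> eps != 0 -> Defs.LHS S1 ->
  (forall a x, S a x = eps *: S1 a x + (1 - eps) *: S2 a x) ->
  exists L, exists2 v : 'cV_d.+1, v != 0 &
    forall ax, in_IL L ax -> Rp ax.1 ax.2 *m v = v.
Proof.
move=> psdS psdS2 /andP[eps_ge0 eps_le1] eps_neq0 LHS1 defS.
have [L [rho [dens_rho supp]]] := LHS_ldbox_support LHS1.
have rho_neq0 : rho != 0.
  by apply: contra_eq_neq dens_rho.2 => ->; rewrite mxtrace0 eq_sym oner_neq0.
have [k rho_k] := col_neq0 rho_neq0.
exists L, (col k rho) => // -[a x] /= ILax.
suff Rrho : Rp a x *m rho = rho by rewrite !colE mulmxA Rrho.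
apply: (orth_proj_onto_absorb (projR a x) (psdS a x) dens_rho.1) => u Su0.
apply: (supp a x u ILax).
have /eqP : eps * qform u (S1 a x) u + (1 - eps) * qform u (S2 a x) u = 0.
  by rewrite -!qformZ -qformD -defS.
have S1_ge0 := mulr_ge0 eps_ge0 (psd_qform_ge0 u (LHS_psd LHS1 a x)).
have S2_ge0 : 0 <= (1 - eps) * qform u (S2 a x) u.
  by rewrite mulr_ge0 ?subr_ge0 // psd_qform_ge0.
by rewrite paddr_eq0 // mulf_eq0 (negbTE eps_neq0) => /andP[/eqP].
Qed.

Lemma ldbox_rank1_dominated L (v : 'cV[C]_d.+1) : (forall a x, psd (S a x)) ->
  v != 0 -> (forall ax, in_IL L ax -> Rp ax.1 ax.2 *m v = v) ->
  exists2 eps : C, 0 < eps < 1 & forall a x,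
    psd (S a x - eps *: ldbox_assemblage L ((sqnorm v)^-1 *: (v *m adj v)) a x).
Proof.
move=> psdS v_neq0 fixed.
have /fin_all_exists[w Sw] ax : exists w, in_IL L ax -> S ax.1 ax.2 *m w = v.
  case: (boolP (in_IL L ax)) => [/fixed/(orth_proj_onto_range (projR _ _))[w Sw] | _].
    by exists w.
  by exists 0.
pose q ax := qform (w ax) (S ax.1 ax.2) (w ax).
have q_ge0 ax : 0 <= q ax by apply: psd_qform_ge0.
pose T := 1 + sqnorm v + \sum_ax q ax.
have T_gt0 : 0 < T by rewrite /T -addrA ltr_pwDl ?ltr01 ?addr_ge0 ?sqnorm_ge0 ?sumr_ge0.
have q_le_T ax : q ax <= T.
  rewrite (@le_trans _ _ (\sum_ax q ax)) ?lerDr ?addr_ge0 ?sqnorm_ge0 //.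
  by rewrite (bigD1 ax) //= lerDl sumr_ge0.
exists (T^-1 * sqnorm v).
  rewrite mulr_gt0 ?invr_gt0 ?sqnorm_gt0 //= mulrC ltr_pdivrMr // mul1r.
  by rewrite /T -addrA addrCA ltrDl ltr_pwDl ?ltr01 ?sumr_ge0.
move=> a x; rewrite /ldbox_assemblage; case: ifP => [ILax | _]; last by rewrite scaler0 subr0.
rewrite scalerA -mulrA mulfV ?sqnorm_eq0 // mulr1 -(Sw (a, x) ILax).
apply: psd_sub_rank1 => //; first by rewrite invr_ge0 ltW.
by rewrite mulrC ler_pdivrMr // mul1r; apply: q_le_T (a, x).
Qed.

Lemma not_on_edge_of_fixed_vector (x0 : setting X) L (v : 'cV[C]_d.+1) :
  no_signaling S -> v != 0 -> (forall ax, in_IL L ax -> Rp ax.1 ax.2 *m v = v) ->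
  ~ on_edge S.
Proof.
move=> nsS v_neq0 fixed edgeS.
have [eps /andP[eps_gt0 eps_lt1] psd_residual] := ldbox_rank1_dominated nsS.2.1 v_neq0 fixed.
have dens_rho := density_rank1 v_neq0.
have nsS2 := no_signaling_residual x0 eps_lt1 nsS
  (ldbox_assemblage_no_signaling L dens_rho) psd_residual.
suff : eps = 0 by move/eqP; rewrite gt_eqF.
apply: (edgeS eps _ _ _ (ldbox_assemblage_LHS L dens_rho) nsS2) => [|a x].
  by rewrite (ltW eps_gt0) (ltW eps_lt1).
have eps1_neq0 : 1 - eps != 0 by rewrite subr_eq0 eq_sym lt_eqF.
by rewrite scalerA mulfV // scale1r addrC subrK.
Qed.

End Edge.

Theorem theorem1 (R : realType) (n : nat) (A X : 'I_n -> nat) (d : nat)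
  (hA : forall i, (0 < A i)%N) (hX : forall i, (0 < X i)%N)
  (S : assemblage R A X d.+1) (hS : no_signaling S)
  (Rp : outcome A -> setting X -> 'M[R[i]]_d.+1)
  (hRp : forall a x, orth_proj_onto (S a x) (Rp a x))
  (ordL : seq (ldbox A X)) (ordI : ldbox A X -> seq (outcome A * setting X))
  (hordL : perm_eq ordL (enum (ldbox A X)))
  (hordI : forall L, perm_eq (ordI L) [seq ax <- enum {: outcome A * setting X} | in_IL L ax]) :
  on_edge S <->
  \det (\prod_(L <- ordL) (\prod_(ax <- ordI L) Rp ax.1 ax.2 - 1)) != 0.
Proof.
have memL L : L \in ordL by rewrite (perm_mem hordL) mem_enum.
have memI L ax : (ax \in ordI L) = in_IL L ax.
  by rewrite (perm_mem (hordI L)) mem_filter mem_enum andbT.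
have detP := det_fixed_vectorP (fun a x => orth_proj_onto_orthoproj (hRp a x)) memL memI.
split=> [edgeS | det_neq0].
  apply/negP => /detP[L [v v_neq0 fixed]].
  exact: (not_on_edge_of_fixed_vector hRp [ffun i => Ordinal (hX i)] hS v_neq0 fixed).
move=> eps S1 S2 eps01 LHS1 nsS2 defS; apply/eqP; apply: contraNT det_neq0 => eps_neq0.
apply/detP.
exact: (fixed_vector_of_decomposition hRp hS.2.1 nsS2.2.1 eps01 eps_neq0 LHS1 defS).
Qed.
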